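(* Let $s>0$, $x_0>0$, and let $P:[0,\infty)\to\mathbb{R}$ be a $\mathcal{C}^2$ increasing function with $P(0)=0$, $P(x)>0$ for $x>0$, satisfying $\int_{x_0}^{\infty}P(z)z^{-1-2/s}\,dz<\infty$. Consider the equation \[ \frac{d\gamma_1}{dx}=\frac{\gamma_1(x)+\gamma_1(x)^2-P(x)}{s\,x\,\gamma_1(x)},\qquad \gamma_1(x_0)=\gamma_0>0, \] and let $\gamma_1^{\star}$ be the separatrix (defined in the context). Then every global solution with $\gamma_1(x_0)>\gamma_1^{\star}(x_0)$ satisfies $C_1x^{1/s}\le\gamma_1(x)\le C_2x^{1/s}$ for all sufficiently large $x$, for some constants $0<C_1<C_2$, while the separatrix satisfies, for some $C>0$ and all $x\ge x_0$, \[ \gamma_c(x)<\gamma_1^{\star}(x)\le\min\Big(\lim_{y\to\infty}\gamma_c(y),\;C\,x^{1/s}\Big), \] where $\gamma_c(x)=\frac{\sqrt{1+4P(x)}-1}{2}$. In particular, if $\lim_{x\to\infty}P(x)<\infty$, the separatrix is the only bounded global solution.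
   Context: Solutions are taken in the region $x>0$, $\gamma_1>0$; a solution is global if it can be continued, remaining strictly positive, to all $x\ge x_0$. Under the stated hypotheses there is a unique value $\gamma_1^{\star}(x_0)>0$ such that the solution with initial value $\gamma_1(x_0)$ is global if and only if $\gamma_1(x_0)\ge\gamma_1^{\star}(x_0)$; the separatrix $\gamma_1^{\star}(x)$ is the solution with initial value $\gamma_1^{\star}(x_0)$ (the smallest global solution). *)

From Stdlib Require Import Reals.
From Coquelicot Require Import Coquelicot.
Open Scope R_scope.

Definition C2_on_R (Q : R -> R) : Prop :=
  forall x, ex_derive Q x /\ ex_derive (Derive Q) x /\ continuous (Derive_n Q 2) x.

(* P is C^2 on [0,oo): it agrees on [0,oo) with a C^2 function on R
   (equivalent to having one-sided derivatives up to order 2 at 0, continuous). *)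
Definition C2_on_nonneg (P : R -> R) : Prop :=
  exists Q : R -> R, C2_on_R Q /\ forall x, 0 <= x -> Q x = P x.

Definition rhs (s : R) (P : R -> R) (x g : R) : R :=
  (g + g ^ 2 - P x) / (s * x * g).

Definition global_solution (s : R) (P : R -> R) (x0 : R) (g : R -> R) : Prop :=
  (forall x, x0 <= x -> 0 < g x) /\
  filterlim g (at_right x0) (locally (g x0)) /\
  (forall x, x0 < x -> is_derive g x (rhs s P x (g x))).

Definition gamma_c (P : R -> R) (x : R) : R := (sqrt (1 + 4 * P x) - 1) / 2.

From Stdlib Require Import Reals Lra Lia Factorial Classical.
From Coquelicot Require Import Coquelicot.
Open Scope R_scope.

(* Every global solution satisfies [P < g + g^2], i.e. [gamma_c < g]: if [g + g^2 - P] ever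
   became nonpositive it would stay so, [g] would decrease, and [g^2] would then be driven
   below zero by a drift of order [ln x].  Writing [g' = (1 + g)/(s x) - P/(s x g)], the
   quantity [(1 + g) x^(-1/s)] is nonincreasing, which gives the upper bound [C x^(1/s)],
   while for two solutions [v <= g] the gap [(g - v) x^(-1/s)] is nondecreasing, which gives
   the lower bound for solutions above the separatrix; solutions are ordered by their
   initial values (Gronwall).  Minimality of the separatrix forces
   [gstar + gstar^2 <= sup P]: otherwise a solution started slightly below [gstar],
   obtained by Picard iteration for a truncated right-hand side, would still be global.
   When [P] has a finite limit the separatrix is therefore bounded, while every solution
   above it grows like [x^(1/s)]. *)

Definition right_continuous (f : R -> R) (a : R) : Prop :=
  filterlim f (at_right a) (locally (f a)).

Lemma right_continuousP (f : R -> R) (a : R) :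
  right_continuous f a <->
  forall e, 0 < e -> exists d, 0 < d /\ forall u, a < u < a + d -> Rabs (f u - f a) < e.
Proof.
  split.
  - intros Hf e He.
    destruct (proj1 (filterlim_locally _ _) Hf (mkposreal e He)) as [d Hd].
    exists d; split; [apply cond_pos|].
    intros u Hu; apply (Hd u); [|lra].
    unfold ball; simpl; unfold AbsRing_ball, abs, minus, plus, opp; simpl.
    rewrite Rabs_right; lra.
  - intros H. apply filterlim_locally. intros eps.
    destruct (H eps (cond_pos eps)) as [d [Hd Hdd]].
    exists (mkposreal d Hd). intros y Hy Hay.
    unfold ball in Hy; simpl in Hy; unfold AbsRing_ball, abs, minus, plus, opp in Hy; simpl in Hy.
    apply Hdd. apply Rabs_def2 in Hy. lra.
Qed.

Lemma continuity_pt_right_continuous (f : R -> R) (a : R) :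
  continuity_pt f a -> right_continuous f a.
Proof.
  intros Hc. apply (filterlim_filter_le_1 (F := locally a)).
  - apply filter_le_within.
  - now apply continuity_pt_filterlim.
Qed.

Lemma is_derive_continuity_pt (f : R -> R) (x l : R) : is_derive f x l -> continuity_pt f x.
Proof.
  intros Hd. apply derivable_continuous_pt. exists l. now apply is_derive_Reals.
Qed.

Lemma is_derive_right_continuous (f : R -> R) (x l : R) :
  is_derive f x l -> right_continuous f x.
Proof.
  intros Hd. apply continuity_pt_right_continuous. exact (is_derive_continuity_pt f x l Hd).
Qed.

Lemma right_continuous_plus (f g : R -> R) (a : R) :
  right_continuous f a -> right_continuous g a -> right_continuous (fun x => f x + g x) a.
Proof.
  intros Hf Hg.
  apply (filterlim_comp_2 (G := locally (f a)) (H := locally (g a)) f g Rplus Hf Hg).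
  exact (filterlim_plus (K := R_AbsRing) (V := R_NormedModule) (f a) (g a)).
Qed.

Lemma right_continuous_mult (f g : R -> R) (a : R) :
  right_continuous f a -> right_continuous g a -> right_continuous (fun x => f x * g x) a.
Proof.
  intros Hf Hg.
  apply (filterlim_comp_2 (G := locally (f a)) (H := locally (g a)) f g Rmult Hf Hg).
  exact (filterlim_mult (K := R_AbsRing) (f a) (g a)).
Qed.

Lemma right_continuous_pow2 (f : R -> R) (a : R) :
  right_continuous f a -> right_continuous (fun x => f x ^ 2) a.
Proof.
  intros Hf. unfold right_continuous. replace (f a ^ 2) with (f a * f a) by ring.
  apply (filterlim_ext (fun x => f x * f x)); [intros x; ring|].
  exact (right_continuous_mult f f a Hf Hf).
Qed.

Lemma right_continuous_opp (f : R -> R) (a : R) :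
  right_continuous f a -> right_continuous (fun x => - f x) a.
Proof.
  intros Hf. apply (filterlim_comp _ _ _ f Ropp (at_right a) (locally (f a)) _ Hf).
  exact (filterlim_opp (V := R_NormedModule) (f a)).
Qed.

Lemma right_continuous_minus (f g : R -> R) (a : R) :
  right_continuous f a -> right_continuous g a -> right_continuous (fun x => f x - g x) a.
Proof.
  intros Hf Hg. apply (right_continuous_plus f (fun x => - g x) a Hf).
  exact (right_continuous_opp g a Hg).
Qed.

Lemma MVT_le (f df : R -> R) (a b : R) : a <= b ->
  (forall x, a <= x <= b -> is_derive f x (df x)) ->
  exists c, a <= c <= b /\ f b - f a = df c * (b - a).
Proof.
  intros Hab Hd.
  assert (Hmin : Rmin a b = a) by (apply Rmin_left; lra).
  assert (Hmax : Rmax a b = b) by (apply Rmax_right; lra).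
  destruct (MVT_gen f a b df) as [c Hc]; rewrite ?Hmin, ?Hmax in *.
  - intros x Hx; apply Hd; lra.
  - intros x Hx; apply (is_derive_continuity_pt f x (df x)), Hd, Hx.
  - now exists c.
Qed.

Lemma le_of_is_derive_nonneg (f df : R -> R) (a b : R) :
  a <= b -> right_continuous f a ->
  (forall x, a < x <= b -> is_derive f x (df x)) ->
  (forall x, a < x <= b -> 0 <= df x) -> f a <= f b.
Proof.
  intros Hab Hrc Hd Hpos.
  destruct (Req_dec a b) as [<-|Hne]; [lra|].
  assert (Hinner : forall a', a < a' < b -> f a' <= f b).
  { intros a' Ha'.
    destruct (MVT_le f df a' b) as [c [Hc Heq]]; [lra|intros x Hx; apply Hd; lra|].
    assert (0 <= df c * (b - a')) by (apply Rmult_le_pos; [apply Hpos|]; lra). lra. }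
  destruct (Rle_or_lt (f a) (f b)) as [H|H]; [exact H|].
  destruct (proj1 (right_continuousP f a) Hrc (f a - f b)) as [d [Hd0 Hdd]]; [lra|].
  set (u := a + Rmin d (b - a) / 2).
  assert (0 < Rmin d (b - a)) by (apply Rmin_glb_lt; lra).
  assert (Rmin d (b - a) <= d) by apply Rmin_l.
  assert (Rmin d (b - a) <= b - a) by apply Rmin_r.
  specialize (Hdd u ltac:(unfold u; lra)).
  specialize (Hinner u ltac:(unfold u; lra)).
  apply Rabs_def2 in Hdd. lra.
Qed.

Lemma ge_of_is_derive_nonpos (f df : R -> R) (a b : R) :
  a <= b -> right_continuous f a ->
  (forall x, a < x <= b -> is_derive f x (df x)) ->
  (forall x, a < x <= b -> df x <= 0) -> f b <= f a.
Proof.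
  intros Hab Hrc Hd Hneg.
  enough (- f a <= - f b) by lra.
  apply (le_of_is_derive_nonneg (fun x => - f x) (fun x => - df x) a b Hab).
  - exact (right_continuous_opp f a Hrc).
  - intros x Hx. apply (is_derive_opp f), Hd, Hx.
  - intros x Hx. specialize (Hneg x Hx). lra.
Qed.

Lemma lt_of_is_derive_pos (f df : R -> R) (a b : R) :
  a < b -> right_continuous f a ->
  (forall x, a < x <= b -> is_derive f x (df x)) ->
  (forall x, a < x <= b -> 0 < df x) -> f a < f b.
Proof.
  intros Hab Hrc Hd Hpos.
  set (m := (a + b) / 2).
  assert (Ham : f a <= f m).
  { apply (le_of_is_derive_nonneg f df a m); try (unfold m; lra); [exact Hrc| |].
    - intros x Hx; apply Hd; unfold m in Hx; lra.
    - intros x Hx; left; apply Hpos; unfold m in Hx; lra. }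
  destruct (MVT_le f df m b) as [c [Hc Heq]];
    [unfold m; lra|intros x Hx; apply Hd; unfold m in Hx; lra|].
  assert (0 < df c * (b - m)) by (apply Rmult_lt_0_compat; [apply Hpos|]; unfold m in *; lra).
  lra.
Qed.

Lemma is_derive_nonneg_of_incr (f : R -> R) (x l : R) :
  (forall h, 0 < h -> f x <= f (x + h)) -> is_derive f x l -> 0 <= l.
Proof.
  intros Hinc Hd. apply is_derive_Reals in Hd.
  destruct (Rle_or_lt 0 l) as [H|H]; [exact H|exfalso].
  destruct (Hd (- l)) as [d Hdd]; [lra|].
  set (h := d / 2).
  assert (Hh : 0 < h) by (unfold h; destruct d; simpl; lra).
  specialize (Hdd h ltac:(lra) ltac:(rewrite Rabs_right; unfold h; destruct d; simpl; lra)).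
  specialize (Hinc h Hh).
  assert (0 <= (f (x + h) - f x) / h) by (apply Rmult_le_pos; [lra|left; apply Rinv_0_lt_compat; lra]).
  apply Rabs_def2 in Hdd. lra.
Qed.

Lemma real_induction (Q : R -> Prop) (a b : R) : a <= b -> Q a ->
  (forall t, a <= t < b -> (forall u, a <= u <= t -> Q u) ->
     exists d, 0 < d /\ forall u, t < u < t + d -> u <= b -> Q u) ->
  (forall t, a < t <= b -> (forall u, a <= u < t -> Q u) -> Q t) ->
  forall u, a <= u <= b -> Q u.
Proof.
  intros Hab Qa Hext Hcl.
  set (E := fun x => a <= x <= b /\ forall u, a <= u <= x -> Q u).
  assert (Ea : E a) by (split; [lra|intros u Hu; now replace u with a by lra]).
  destruct (completeness E) as [m [Hub Hlub]].
  { exists b. intros x [Hx _]; lra. }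
  { now exists a. }
  assert (Ham : a <= m) by (apply Hub, Ea).
  assert (Hmb : m <= b) by (apply Hlub; intros x [Hx _]; lra).
  assert (Hbelow : forall u, a <= u < m -> Q u).
  { intros u Hu.
    destruct (classic (exists x, E x /\ u <= x)) as [[x [[_ Hx] Hux]]|Hno].
    - apply Hx; lra.
    - exfalso. enough (m <= u) by lra.
      apply Hlub. intros x Ex. destruct (Rle_or_lt x u) as [|Hlt]; [assumption|].
      exfalso; apply Hno; exists x; split; [exact Ex|lra]. }
  assert (Em : forall u, a <= u <= m -> Q u).
  { intros u Hu. destruct (Req_dec u m) as [->|Hne]; [|apply Hbelow; lra].
    destruct (Req_dec m a) as [->|Hma]; [exact Qa|apply Hcl; [lra|exact Hbelow]]. }
  destruct (Req_dec m b) as [Hmb'|Hmb'].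
  - intros u Hu. apply Em; lra.
  - exfalso. destruct (Hext m) as [d [Hd Hdd]]; [lra|exact Em|].
    set (m' := Rmin (m + d / 2) b).
    assert (m' <= m + d / 2) by apply Rmin_l.
    assert (m' <= b) by apply Rmin_r.
    assert (m < m') by (apply Rmin_glb_lt; lra).
    assert (Em' : E m').
    { split; [lra|]. intros u Hu. destruct (Rle_or_lt u m); [apply Em|apply Hdd]; lra. }
    specialize (Hub m' Em'). lra.
Qed.

Lemma barrier_le (f df : R -> R) (a b l lo hi : R) :
  a <= b -> lo < l < hi -> f a <= l -> right_continuous f a ->
  (forall x, a < x <= b -> is_derive f x (df x)) ->
  (forall x, a < x <= b -> lo < f x < hi -> df x <= 0) ->
  forall x, a <= x <= b -> f x <= l.
Proof.
  intros Hab Hl Hfa Hrc Hd Hdf.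
  apply real_induction; [exact Hab|exact Hfa| |].
  - intros t Ht Hbel.
    assert (Hrt : right_continuous f t).
    { destruct (Req_dec t a) as [->|Hne]; [exact Hrc|].
      apply (is_derive_right_continuous f t (df t)), Hd; lra. }
    assert (Hft : f t <= l) by (apply Hbel; lra).
    destruct (Rlt_or_le (f t) l) as [Hlt|Hge].
    + destruct (proj1 (right_continuousP f t) Hrt (l - f t)) as [d [Hd0 Hdd]]; [lra|].
      exists d; split; [exact Hd0|]. intros u Hu Hub.
      specialize (Hdd u Hu). apply Rabs_def2 in Hdd. lra.
    + destruct (proj1 (right_continuousP f t) Hrt (Rmin (l - lo) (hi - l)))
        as [d [Hd0 Hdd]]; [apply Rmin_glb_lt; lra|].
      assert (Rmin (l - lo) (hi - l) <= l - lo) by apply Rmin_l.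
      assert (Rmin (l - lo) (hi - l) <= hi - l) by apply Rmin_r.
      exists d; split; [exact Hd0|]. intros u Hu Hub.
      enough (f u <= f t) by lra.
      apply (ge_of_is_derive_nonpos f df t u); [lra|exact Hrt| |].
      * intros x Hx; apply Hd; lra.
      * intros x Hx. apply Hdf; [lra|].
        specialize (Hdd x ltac:(lra)). apply Rabs_def2 in Hdd. lra.
  - intros t Ht Hbel.
    destruct (Rle_or_lt (f t) l) as [H|H]; [exact H|exfalso].
    assert (Hct : continuity_pt f t) by (apply (is_derive_continuity_pt f t (df t)), Hd; lra).
    destruct (proj1 (continuity_pt_locally f t) Hct (mkposreal (f t - l) ltac:(lra)))
      as [d Hdd].
    set (u := Rmax a (t - d / 2)).
    assert (a <= u) by apply Rmax_l.
    assert (t - d / 2 <= u) by apply Rmax_r.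
    assert (u < t) by (apply Rmax_lub_lt; [|destruct d; simpl]; lra).
    assert (Hfu : f u <= l) by (apply Hbel; lra).
    assert (Hball : ball t d u).
    { unfold ball; simpl; unfold AbsRing_ball, abs, minus, plus, opp; simpl.
      rewrite Rabs_left; lra. }
    specialize (Hdd u Hball). simpl in Hdd. apply Rabs_def2 in Hdd. lra.
Qed.

Lemma is_derive_mult_exp (f : R -> R) (df K x : R) : is_derive f x df ->
  is_derive (fun t => f t * exp (- K * t)) x ((df - K * f x) * exp (- K * x)).
Proof.
  intros Hf.
  replace ((df - K * f x) * exp (- K * x)) with (df * exp (- K * x) + f x * (- K * exp (- K * x)))
    by ring.
  apply (is_derive_mult f (fun t => exp (- K * t))); [exact Hf| |exact Rmult_comm].
  auto_derive; [exact I|ring].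
Qed.

Lemma right_continuous_mult_exp (f : R -> R) (K a : R) :
  right_continuous f a -> right_continuous (fun t => f t * exp (- K * t)) a.
Proof.
  intros Hf. apply (right_continuous_mult f _ a Hf), continuity_pt_right_continuous.
  apply derivable_continuous_pt. reg.
Qed.

Lemma gronwall_nonpos (f df : R -> R) (K a b : R) :
  a <= b -> f a <= 0 -> right_continuous f a ->
  (forall x, a < x <= b -> is_derive f x (df x)) ->
  (forall x, a < x <= b -> 0 < f x -> df x <= K * f x) -> f b <= 0.
Proof.
  intros Hab Hfa Hrc Hd Hdf.
  set (F := fun x => f x * exp (- K * x)).
  assert (HF : forall x, 0 < F x <-> 0 < f x).
  { intros x. assert (0 < exp (- K * x)) by apply exp_pos. unfold F; split; intros Hp.
    - destruct (Rle_or_lt (f x) 0); [nra|assumption].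
    - nra. }
  destruct (Rle_or_lt (f b) 0) as [Hb|Hb]; [exact Hb|exfalso].
  apply HF in Hb.
  enough (F b <= F b / 2) by lra.
  apply (barrier_le F (fun x => (df x - K * f x) * exp (- K * x)) a b (F b / 2) 0 (F b + 1));
    try lra.
  - unfold F in *. assert (0 < exp (- K * a)) by apply exp_pos. nra.
  - now apply right_continuous_mult_exp.
  - intros x Hx. apply is_derive_mult_exp, Hd, Hx.
  - intros x Hx Hband. specialize (Hdf x Hx (proj1 (HF x) (proj1 Hband))).
    assert (0 < exp (- K * x)) by apply exp_pos. nra.
Qed.

Lemma gronwall_le (f df : R -> R) (K a b : R) :
  a <= b -> right_continuous f a ->
  (forall x, a < x <= b -> is_derive f x (df x)) ->
  (forall x, a < x <= b -> df x <= K * f x) -> f b <= f a * exp (K * (b - a)).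
Proof.
  intros Hab Hrc Hd Hdf.
  assert (Hdec : f b * exp (- K * b) <= f a * exp (- K * a)).
  { apply (ge_of_is_derive_nonpos (fun x => f x * exp (- K * x))
             (fun x => (df x - K * f x) * exp (- K * x)) a b Hab).
    - now apply right_continuous_mult_exp.
    - intros x Hx. apply is_derive_mult_exp, Hd, Hx.
    - intros x Hx. specialize (Hdf x Hx). assert (0 < exp (- K * x)) by apply exp_pos. nra. }
  assert (Hexp : exp (K * (b - a)) = exp (- K * a) * exp (K * b)).
  { rewrite <- exp_plus. f_equal. ring. }
  assert (Hinv : exp (- K * b) * exp (K * b) = 1).
  { rewrite <- exp_plus, <- exp_0. f_equal. ring. }
  assert (0 < exp (K * b)) by apply exp_pos.
  rewrite Hexp. replace (f b) with (f b * exp (- K * b) * exp (K * b))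
    by (rewrite Rmult_assoc, Hinv; ring).
  rewrite <- Rmult_assoc. apply Rmult_le_compat_r; lra.
Qed.

Lemma lipschitz_ode_stability (G : R -> R -> R) (K a b : R) (h v : R -> R) :
  0 <= K -> (forall t y1 y2, Rabs (G t y1 - G t y2) <= K * Rabs (y1 - y2)) ->
  a <= b -> right_continuous h a -> right_continuous v a ->
  (forall x, a < x <= b -> is_derive h x (G x (h x)) /\ is_derive v x (G x (v x))) ->
  Rabs (h b - v b) <= Rabs (h a - v a) * exp (K * (b - a)).
Proof.
  intros HK HL Hab Hh Hv Hd.
  set (w := fun x => h x - v x).
  assert (Hw : right_continuous w a) by now apply right_continuous_minus.
  assert (Hsq : w b * w b <= w a * w a * exp (2 * K * (b - a))).
  { apply (gronwall_le (fun x => w x * w x)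
             (fun x => (G x (h x) - G x (v x)) * w x + w x * (G x (h x) - G x (v x))));
      [exact Hab|now apply right_continuous_mult| |].
    - intros x Hx. destruct (Hd x Hx) as [Hhx Hvx].
      apply (is_derive_mult w w); [| |exact Rmult_comm]; now apply (is_derive_minus h v).
    - intros x Hx. specialize (HL x (h x) (v x)). fold (w x) in HL.
      assert (w x * (G x (h x) - G x (v x)) <= K * (w x * w x)).
      { assert (Hprod := Rle_abs (w x * (G x (h x) - G x (v x)))). rewrite Rabs_mult in Hprod.
        assert (Rabs (w x) * Rabs (w x) = w x * w x)
          by (rewrite <- Rabs_mult; apply Rabs_right, Rle_ge, Rle_0_sqr).
        assert (0 <= Rabs (w x)) by apply Rabs_pos. nra. }
      lra. }
  assert (Hexp : exp (2 * K * (b - a)) = exp (K * (b - a)) * exp (K * (b - a))).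
  { rewrite <- exp_plus. f_equal. ring. }
  rewrite Hexp in Hsq.
  rewrite <- (Rabs_right (exp (K * (b - a)))) by (left; apply exp_pos).
  rewrite <- Rabs_mult. apply Rsqr_le_abs_0. unfold Rsqr. fold (w a) (w b). nra.
Qed.

Lemma abs_le_of_is_derive_abs_le (D dD phi dphi : R -> R) (a b : R) :
  a <= b -> Rabs (D a) <= phi a ->
  (forall x, a <= x <= b -> is_derive D x (dD x) /\ is_derive phi x (dphi x)) ->
  (forall x, a < x <= b -> Rabs (dD x) <= dphi x) -> Rabs (D b) <= phi b.
Proof.
  intros Hab Ha Hd Hdd.
  assert (H1 : phi a - D a <= phi b - D b).
  { apply (le_of_is_derive_nonneg (fun x => phi x - D x) (fun x => dphi x - dD x) a b Hab).
    - apply (is_derive_right_continuous _ a (dphi a - dD a)).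
      apply (is_derive_minus phi D); apply Hd; lra.
    - intros x Hx. apply (is_derive_minus phi D); apply Hd; lra.
    - intros x Hx. specialize (Hdd x Hx). assert (dD x <= Rabs (dD x)) by apply Rle_abs. lra. }
  assert (H2 : phi a + D a <= phi b + D b).
  { apply (le_of_is_derive_nonneg (fun x => phi x + D x) (fun x => dphi x + dD x) a b Hab).
    - apply (is_derive_right_continuous _ a (dphi a + dD a)).
      apply (is_derive_plus phi D); apply Hd; lra.
    - intros x Hx. apply (is_derive_plus phi D); apply Hd; lra.
    - intros x Hx. specialize (Hdd x Hx). assert (- dD x <= Rabs (dD x)) by apply Rabs_maj2. lra. }
  apply Rabs_le. assert (Ha' := Rabs_le_between (D a) (phi a)). split; destruct Ha'; lra.
Qed.

Lemma is_derive_pow_div_fact (C a t : R) (m : nat) :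
  is_derive (fun u => C * (u - a) ^ S m / INR (fact (S m))) t (C * (t - a) ^ m / INR (fact m)).
Proof.
  assert (Hf : INR (fact (S m)) = INR (S m) * INR (fact m)) by (rewrite <- mult_INR; reflexivity).
  assert (INR (fact m) <> 0) by apply INR_fact_neq_0.
  assert (INR (S m) <> 0) by (apply not_0_INR; lia).
  rewrite Hf. auto_derive; [exact I|].
  change (match m with 0%nat => 1 | S _ => INR m + 1 end) with (INR (S m)).
  replace (t + - a) with (t - a) by ring. field. auto.
Qed.

Fixpoint exp_partial (q : R) (n : nat) : R :=
  match n with O => 0 | S k => exp_partial q k + q ^ k / INR (fact k) end.

Lemma is_lim_seq_exp_partial (q : R) : is_lim_seq (exp_partial q) (exp q).
Proof.
  apply is_lim_seq_incr_1.
  apply is_lim_seq_ext with (u := sum_n (fun k => scal (pow_n q k) (/ INR (fact k)))).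
  2: exact (is_exp_Reals q).
  intros n. induction n as [|n IH].
  - rewrite sum_O, pow_n_pow. simpl. unfold scal; simpl. unfold mult; simpl. field.
  - rewrite sum_Sn, IH, pow_n_pow. reflexivity.
Qed.

Lemma exp_partial_le (q : R) (n m : nat) : 0 <= q -> (n <= m)%nat ->
  exp_partial q n <= exp_partial q m.
Proof.
  intros Hq Hnm. induction Hnm as [|m Hnm IH]; [lra|].
  simpl. assert (0 <= q ^ m / INR (fact m)).
  { apply Rmult_le_pos; [now apply pow_le|].
    left. apply Rinv_0_lt_compat, INR_fact_lt_0. }
  lra.
Qed.

Lemma exp_partial_le_exp (q : R) (n : nat) : 0 <= q -> exp_partial q n <= exp q.
Proof.
  intros Hq. apply (is_lim_seq_incr_compare (exp_partial q) (exp q) (is_lim_seq_exp_partial q)).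
  intros k. apply exp_partial_le; [exact Hq|lia].
Qed.

Lemma exp_partial_tail_small (q C eps : R) : 0 <= C -> 0 < eps ->
  exists N, forall n, (N <= n)%nat -> C * (exp q - exp_partial q n) < eps.
Proof.
  intros HC He.
  assert (He' : 0 < eps / (C + 1)) by (apply Rdiv_lt_0_compat; lra).
  destruct (proj2 (is_lim_seq_spec _ _) (is_lim_seq_exp_partial q) (mkposreal _ He')) as [N HN].
  exists N. intros n Hn. specialize (HN n Hn). simpl in HN. apply Rabs_def2 in HN.
  assert (C * (exp q - exp_partial q n) <= C * (eps / (C + 1))).
  { apply Rmult_le_compat_l; lra. }
  assert (C * (eps / (C + 1)) < eps).
  { apply (Rmult_lt_reg_r (C + 1)); [lra|]. unfold Rdiv. field_simplify; lra. }
  lra.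
Qed.

Section Picard.

Variables (G : R -> R -> R) (x0 c K M : R).
Hypothesis G_cont : forall phi : R -> R, (forall t, continuity_pt phi t) ->
  forall t, continuity_pt (fun u => G u (phi u)) t.
Hypothesis K_ge0 : 0 <= K.
Hypothesis M_ge0 : 0 <= M.
Hypothesis G_lipschitz : forall t y1 y2, Rabs (G t y1 - G t y2) <= K * Rabs (y1 - y2).
Hypothesis G_bound : forall t, Rabs (G t c) <= M.

Fixpoint picard (n : nat) : R -> R :=
  match n with
  | O => fun _ => c
  | S k => fun t => c + RInt (fun u => G u (picard k u)) x0 t
  end.

Lemma picard_x0 (n : nat) : picard n x0 = c.
Proof. destruct n; simpl; [reflexivity|]. rewrite RInt_point. unfold zero; simpl; ring. Qed.

Lemma is_derive_picard_step (n : nat) : (forall t, continuity_pt (picard n) t) ->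
  forall t, is_derive (picard (S n)) t (G t (picard n t)).
Proof.
  intros Hc t.
  set (f := fun u => G u (picard n u)).
  assert (Hf : forall u, continuous f u) by (intros u; now apply continuity_pt_filterlim, G_cont).
  replace (G t (picard n t)) with (0 + f t) by (unfold f; ring).
  apply (is_derive_plus (fun _ => c) (fun b => RInt f x0 b)).
  - exact (is_derive_const (K := R_AbsRing) (V := R_NormedModule) c t).
  - apply (is_derive_RInt f (fun b => RInt f x0 b) x0 t); [|apply Hf].
    apply filter_forall. intros b.
    exact (RInt_correct f x0 b (ex_RInt_continuous f x0 b (fun z _ => Hf z))).
Qed.

Lemma continuity_picard (n : nat) (t : R) : continuity_pt (picard n) t.
Proof.
  revert t. induction n as [|n IH]; intros t.
  - apply continuity_pt_const. now intros ? ?.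
  - exact (is_derive_continuity_pt _ t _ (is_derive_picard_step n IH t)).
Qed.

Lemma is_derive_picard (n : nat) (t : R) : is_derive (picard (S n)) t (G t (picard n t)).
Proof. exact (is_derive_picard_step n (continuity_picard n) t). Qed.

Lemma picard_step_le (k : nat) (t : R) : x0 <= t ->
  Rabs (picard (S k) t - picard k t) <= M * K ^ k * (t - x0) ^ S k / INR (fact (S k)).
Proof.
  revert t. induction k as [|k IH]; intros t Ht.
  - apply (abs_le_of_is_derive_abs_le (fun u => picard 1 u - picard 0 u) (fun u => G u c - 0)
             (fun u => M * K ^ 0 * (u - x0) ^ 1 / INR (fact 1))
             (fun u => M * K ^ 0 * (u - x0) ^ 0 / INR (fact 0)) x0 t Ht).
    + rewrite !picard_x0. replace (x0 - x0) with 0 by ring. simpl. rewrite Rminus_diag, Rabs_R0. lra.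
    + intros x Hx. split; [|apply is_derive_pow_div_fact].
      apply (is_derive_minus (picard 1) (picard 0)); [apply is_derive_picard|].
      exact (is_derive_const (K := R_AbsRing) (V := R_NormedModule) c x).
    + intros x Hx. simpl. rewrite Rminus_0_r. specialize (G_bound x). lra.
  - apply (abs_le_of_is_derive_abs_le (fun u => picard (S (S k)) u - picard (S k) u)
             (fun u => G u (picard (S k) u) - G u (picard k u))
             (fun u => M * K ^ S k * (u - x0) ^ S (S k) / INR (fact (S (S k))))
             (fun u => M * K ^ S k * (u - x0) ^ S k / INR (fact (S k))) x0 t Ht).
    + rewrite !picard_x0. replace (x0 - x0) with 0 by ring.
      rewrite Rminus_diag, Rabs_R0, pow_i by lia. unfold Rdiv. lra.
    + intros x Hx. split; [|apply is_derive_pow_div_fact].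
      apply (is_derive_minus (picard (S (S k))) (picard (S k))); apply is_derive_picard.
    + intros x Hx. eapply Rle_trans; [apply G_lipschitz|].
      eapply Rle_trans; [apply Rmult_le_compat_l; [exact K_ge0|apply IH; lra]|].
      right. simpl pow. unfold Rdiv. ring.
Qed.

Lemma picard_step_le_exp_term (r : R) (k : nat) (t : R) : x0 <= t <= x0 + r ->
  Rabs (picard (S k) t - picard k t) <= (t - x0) * M * ((K * r) ^ k / INR (fact k)).
Proof.
  intros Ht.
  eapply Rle_trans; [apply (picard_step_le k t); lra|].
  assert (HF : INR (fact (S k)) = INR (S k) * INR (fact k)) by (rewrite <- mult_INR; reflexivity).
  assert (0 < INR (fact k)) by apply INR_fact_lt_0.
  assert (1 <= INR (S k)) by (rewrite S_INR; assert (0 <= INR k) by apply pos_INR; lra).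
  set (A := M * K ^ k * (t - x0)).
  assert (0 <= A) by (apply Rmult_le_pos; [apply Rmult_le_pos, pow_le|]; lra).
  replace (M * K ^ k * (t - x0) ^ S k / INR (fact (S k)))
    with (A * (t - x0) ^ k * / (INR (S k) * INR (fact k))) by (rewrite HF, <- tech_pow_Rmult; unfold A; field; split; lra).
  replace ((t - x0) * M * ((K * r) ^ k / INR (fact k))) with (A * r ^ k * / INR (fact k))
    by (rewrite Rpow_mult_distr; unfold A; field; lra).
  apply Rmult_le_compat.
  - apply Rmult_le_pos; [|apply pow_le]; lra.
  - left. apply Rinv_0_lt_compat. nra.
  - apply Rmult_le_compat_l; [lra|]. apply pow_incr; lra.
  - apply Rinv_le_contravar; nra.
Qed.

Lemma picard_diff_le (r : R) (t : R) (n m : nat) : 0 <= r -> x0 <= t <= x0 + r -> (n <= m)%nat ->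
  Rabs (picard m t - picard n t) <= (t - x0) * M * (exp_partial (K * r) m - exp_partial (K * r) n).
Proof.
  intros HR Ht Hnm. induction Hnm as [|m Hnm IH].
  - rewrite Rminus_diag, Rabs_R0. right; ring.
  - replace (picard (S m) t - picard n t) with
      ((picard (S m) t - picard m t) + (picard m t - picard n t)) by ring.
    eapply Rle_trans; [apply Rabs_triang|].
    assert (H1 := picard_step_le_exp_term r m t Ht).
    simpl exp_partial. lra.
Qed.

Definition picard_lim (t : R) : R := real (Lim_seq (fun n => picard n t)).

Lemma is_lim_seq_picard (t : R) : x0 <= t -> is_lim_seq (fun n => picard n t) (picard_lim t).
Proof.
  intros Ht.
  assert (Hq : 0 <= K * (t - x0)) by (apply Rmult_le_pos; lra).
  assert (Hex : ex_finite_lim_seq (fun n => picard n t)).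
  { apply ex_lim_seq_cauchy_corr. intros eps.
    destruct (exp_partial_tail_small (K * (t - x0)) ((t - x0) * M) (eps / 2))
      as [N HN]; [apply Rmult_le_pos; lra|destruct eps; simpl; lra|].
    exists N.
    assert (Hle : forall n m, (N <= n)%nat -> (n <= m)%nat ->
               Rabs (picard n t - picard m t) < eps).
    { intros n m Hn Hnm. rewrite Rabs_minus_sym.
      eapply Rle_lt_trans; [apply (picard_diff_le (t - x0)); [lra|lra|exact Hnm]|].
      assert (exp_partial (K * (t - x0)) m <= exp (K * (t - x0)))
        by now apply exp_partial_le_exp.
      specialize (HN n Hn). destruct eps as [eps Heps]. simpl in *.
      assert (0 <= (t - x0) * M) by (apply Rmult_le_pos; lra).
      nra. }
    intros n m Hn Hm. destruct (Nat.le_ge_cases n m) as [Hnm|Hnm].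
    - now apply Hle.
    - rewrite Rabs_minus_sym. apply Hle; lia. }
  apply ex_finite_lim_seq_correct in Hex. destruct Hex as [Hex Hfin].
  unfold picard_lim. rewrite Hfin. now apply Lim_seq_correct.
Qed.

Lemma picard_lim_tail (r : R) (t : R) (n : nat) : 0 <= r -> x0 <= t <= x0 + r ->
  Rabs (picard n t - picard_lim t) <= (t - x0) * M * (exp (K * r) - exp_partial (K * r) n).
Proof.
  intros HR Ht.
  rewrite Rabs_minus_sym.
  apply (is_lim_seq_le_loc (fun m => Rabs (picard m t - picard n t))
           (fun m => (t - x0) * M * (exp_partial (K * r) m - exp_partial (K * r) n))
           (Rabs (picard_lim t - picard n t))
           ((t - x0) * M * (exp (K * r) - exp_partial (K * r) n))).
  - exists n. intros m Hm. now apply picard_diff_le.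
  - apply (is_lim_seq_abs _ (picard_lim t - picard n t)).
    apply (is_lim_seq_minus' _ _ (picard_lim t) (picard n t));
      [apply is_lim_seq_picard; lra|apply is_lim_seq_const].
  - apply (is_lim_seq_scal_l _ ((t - x0) * M) (exp (K * r) - exp_partial (K * r) n)).
    apply (is_lim_seq_minus' _ _ (exp (K * r)) (exp_partial (K * r) n));
      [apply is_lim_seq_exp_partial|apply is_lim_seq_const].
Qed.

Lemma picard_lim_x0 : picard_lim x0 = c.
Proof.
  unfold picard_lim. rewrite (Lim_seq_ext _ (fun _ => c)) by (intros n; apply picard_x0).
  now rewrite Lim_seq_const.
Qed.

Lemma right_continuous_picard_lim : right_continuous picard_lim x0.
Proof.
  apply right_continuousP. intros e He.
  set (B := M * exp K).
  assert (0 <= B) by (apply Rmult_le_pos; [|left; apply exp_pos]; lra).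
  set (d := Rmin 1 (e / (B + 1))).
  assert (d <= 1) by apply Rmin_l.
  assert (d <= e / (B + 1)) by apply Rmin_r.
  assert (0 < d) by (apply Rmin_glb_lt; [lra|apply Rdiv_lt_0_compat; lra]).
  exists d; split; [assumption|]. intros u Hu.
  assert (Ht := picard_lim_tail 1 u 0 ltac:(lra) ltac:(lra)).
  simpl picard in Ht. simpl exp_partial in Ht. rewrite Rmult_1_r, Rminus_0_r in Ht.
  rewrite picard_lim_x0, Rabs_minus_sym.
  assert (B * d <= B * (e / (B + 1))) by (apply Rmult_le_compat_l; lra).
  assert (B * (e / (B + 1)) < e).
  { apply (Rmult_lt_reg_r (B + 1)); [lra|]. unfold Rdiv. field_simplify; lra. }
  unfold B in *. nra.
Qed.

Lemma picard_uniform_tail (r eps : R) : 0 <= r -> 0 < eps ->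
  exists N, forall n x, (N <= n)%nat -> x0 <= x <= x0 + r ->
    Rabs (picard n x - picard_lim x) < eps.
Proof.
  intros Hr Heps.
  destruct (exp_partial_tail_small (K * r) (r * M) eps) as [N HN]; [nra|exact Heps|].
  exists N. intros n x Hn Hx.
  eapply Rle_lt_trans; [apply (picard_lim_tail r); [exact Hr|exact Hx]|].
  eapply Rle_lt_trans; [|apply (HN n Hn)].
  apply Rmult_le_compat_r; [|apply Rmult_le_compat_r; lra].
  assert (exp_partial (K * r) n <= exp (K * r)) by (apply exp_partial_le_exp; nra). lra.
Qed.

Lemma G_picard_uniform_tail (r eps : R) : 0 <= r -> 0 < eps ->
  exists N, forall n x, (N <= n)%nat -> x0 <= x <= x0 + r ->
    Rabs (G x (picard n x) - G x (picard_lim x)) < eps.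
Proof.
  intros Hr Heps.
  destruct (picard_uniform_tail r (eps / (K + 1))) as [N HN];
    [exact Hr|apply Rdiv_lt_0_compat; lra|].
  exists N. intros n x Hn Hx.
  eapply Rle_lt_trans; [apply G_lipschitz|].
  apply (Rle_lt_trans _ (K * (eps / (K + 1)))).
  - apply Rmult_le_compat_l; [exact K_ge0|]. left; now apply HN.
  - apply (Rmult_lt_reg_r (K + 1)); [lra|]. unfold Rdiv. field_simplify; lra.
Qed.

Lemma is_derive_picard_lim (t : R) : x0 < t -> is_derive picard_lim t (G t (picard_lim t)).
Proof.
  intros Ht.
  set (r := t - x0 + 1).
  set (D := fun x => x0 < x /\ x < x0 + r).
  set (fn := fun n => picard (S n)).
  assert (HLim : forall x, real (Lim_seq (fun n => fn n x)) = picard_lim x).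
  { intros x. unfold fn. now rewrite (Lim_seq_incr_1 (fun n => picard n x)). }
  assert (HDer : forall n x, Derive (fn n) x = G x (picard n x)).
  { intros n x. apply is_derive_unique, is_derive_picard. }
  assert (HGlim : forall x, x0 <= x ->
            Lim_seq (fun n => Derive (fn n) x) = G x (picard_lim x)).
  { intros x Hx. apply is_lim_seq_unique, is_lim_seq_spec. intros eps.
    destruct (G_picard_uniform_tail (x - x0) eps) as [N HN]; [lra|apply cond_pos|].
    exists N. intros n Hn. rewrite HDer. apply HN; [exact Hn|lra]. }
  assert (HCV : CVU_dom fn D).
  { intros eps. destruct (picard_uniform_tail r eps) as [N HN]; [unfold r; lra|apply cond_pos|].
    exists N. intros n Hn x Hx. rewrite HLim. apply HN; [lia|unfold D in Hx; lra]. }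
  assert (HCVD : CVU_dom (fun n x => Derive (fn n) x) D).
  { intros eps.
    destruct (G_picard_uniform_tail r eps) as [N HN]; [unfold r; lra|apply cond_pos|].
    exists N. intros n Hn x Hx. unfold D in Hx. rewrite (HGlim x ltac:(lra)). simpl.
    rewrite HDer. apply HN; [exact Hn|lra]. }
  assert (Hd := CVU_Derive fn D (open_and _ _ (open_gt x0) (open_lt (x0 + r)))
                  ltac:(intros a b x Ha Hb Hx; unfold D in *; lra) HCV
                  ltac:(intros n x _; exists (G x (picard n x)); apply is_derive_picard)
                  ltac:(intros n x _; apply continuity_pt_ext with (f := fun x => G x (picard n x));
                        [intros y; symmetry; apply HDer|apply G_cont, continuity_picard])
                  HCVD t ltac:(unfold D, r; lra)).
  rewrite (HGlim t ltac:(lra)) in Hd.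
  apply (is_derive_ext _ _ _ _ HLim Hd).
Qed.

Theorem picard_lindelof : exists h : R -> R,
  h x0 = c /\ right_continuous h x0 /\ forall t, x0 < t -> is_derive h t (G t (h t)).
Proof.
  exists picard_lim. split; [apply picard_lim_x0|].
  split; [apply right_continuous_picard_lim|apply is_derive_picard_lim].
Qed.

End Picard.

Lemma gamma_c_lt (P : R -> R) (x v : R) : 0 <= v -> 0 <= P x -> P x < v + v ^ 2 -> gamma_c P x < v.
Proof.
  intros Hv Hp H. unfold gamma_c.
  assert (Hsq := sqrt_sqrt (1 + 4 * P x) ltac:(lra)).
  assert (Hs0 := sqrt_pos (1 + 4 * P x)).
  destruct (Rlt_or_le ((sqrt (1 + 4 * P x) - 1) / 2) v) as [Hq|Hq]; [exact Hq|].
  assert (2 * v + 1 <= sqrt (1 + 4 * P x)) by lra. nra.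
Qed.

Lemma gamma_c_ge (P : R -> R) (x v : R) : 0 <= v -> v + v ^ 2 <= P x -> v <= gamma_c P x.
Proof.
  intros Hv H. unfold gamma_c.
  assert (0 <= v ^ 2) by (apply pow2_ge_0).
  assert (Hsq := sqrt_sqrt (1 + 4 * P x) ltac:(lra)).
  assert (Hs0 := sqrt_pos (1 + 4 * P x)).
  destruct (Rle_or_lt v ((sqrt (1 + 4 * P x) - 1) / 2)) as [Hq|Hq]; [exact Hq|].
  assert (sqrt (1 + 4 * P x) < 2 * v + 1) by lra. nra.
Qed.

Lemma gamma_c_le (P : R -> R) (x y : R) : P x <= P y -> gamma_c P x <= gamma_c P y.
Proof.
  intros H. unfold gamma_c.
  assert (sqrt (1 + 4 * P x) <= sqrt (1 + 4 * P y)) by (apply sqrt_le_1_alt; lra). lra.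
Qed.

Lemma gamma_c_pos (P : R -> R) (x : R) : 0 < P x -> 0 < gamma_c P x.
Proof.
  intros H. unfold gamma_c.
  assert (Hs : sqrt 1 < sqrt (1 + 4 * P x)) by (apply sqrt_lt_1_alt; lra).
  rewrite sqrt_1 in Hs. lra.
Qed.

Lemma Rabs_Rmax_sub_le (y1 y2 a : R) : Rabs (Rmax y1 a - Rmax y2 a) <= Rabs (y1 - y2).
Proof.
  unfold Rmax. destruct (Rle_dec y1 a), (Rle_dec y2 a);
    apply Rabs_le; assert (H := Rle_abs (y1 - y2)); assert (H' := Rabs_maj2 (y1 - y2)); lra.
Qed.

Lemma continuity_pt_Rmax (f g : R -> R) (x : R) :
  continuity_pt f x -> continuity_pt g x -> continuity_pt (fun u => Rmax (f u) (g u)) x.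
Proof.
  intros Hf Hg.
  apply continuity_pt_ext with (f := fun u => (f u + g u + Rabs (f u - g u)) / 2).
  { intros u. unfold Rmax. destruct (Rle_dec (f u) (g u)).
    - rewrite Rabs_left1 by lra. field.
    - rewrite Rabs_right by lra. field. }
  apply continuity_pt_div; [|apply continuity_pt_const; now intros ? ?|lra].
  apply continuity_pt_plus; [now apply continuity_pt_plus|].
  apply (continuity_pt_comp (fun u => f u - g u) Rabs);
    [now apply continuity_pt_minus|apply Rcontinuity_abs].
Qed.

Lemma rhs_sub (s : R) (P : R -> R) (x g1 g2 : R) : s <> 0 -> x <> 0 -> g1 <> 0 -> g2 <> 0 ->
  rhs s P x g1 - rhs s P x g2 = (g1 - g2) * (1 / (s * x) + P x / (s * x * (g1 * g2))).
Proof. intros. unfold rhs. field. auto. Qed.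

Lemma exp_le_compat (x y : R) : x <= y -> exp x <= exp y.
Proof. intros H. destruct (Req_dec x y) as [->|Hne]; [lra|left; apply exp_increasing; lra]. Qed.

Lemma Rpower_opp_mul (x y : R) : 0 < x -> Rpower x (- y) * Rpower x y = 1.
Proof. intros Hx. now rewrite <- Rpower_plus, Rplus_opp_l, Rpower_O. Qed.

Lemma is_derive_Rpower (x y : R) : 0 < x -> is_derive (fun t => Rpower t y) x (y * Rpower x y / x).
Proof. intros Hx. unfold Rpower. auto_derive; [exact Hx|]. field. lra. Qed.

Lemma Rbar_le_Lim_p_infty (f : R -> R) (c Y : R) :
  (forall x, Y <= x -> c <= f x) -> Rbar_le c (Lim f p_infty).
Proof.
  intros H. unfold Lim. simpl Rbar_loc_seq. rewrite <- (Lim_seq_const c).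
  apply Lim_seq_le_loc.
  destruct (INR_unbounded Y) as [N HN].
  exists N. intros n Hn. apply H.
  assert (INR N <= INR n) by (apply le_INR; exact Hn). lra.
Qed.

Lemma le_lim_of_incr (f : R -> R) (x L : R) :
  (forall y, x < y -> f x < f y) -> is_lim f p_infty L -> f x <= L.
Proof.
  intros Hinc Hl.
  destruct (Rle_or_lt (f x) L) as [H|H]; [exact H|exfalso].
  destruct (proj2 (is_lim_spec f p_infty L) Hl (mkposreal (f x - L) ltac:(lra))) as [M HM].
  set (z := Rmax (M + 1) (x + 1)).
  assert (M + 1 <= z) by apply Rmax_l. assert (x + 1 <= z) by apply Rmax_r.
  specialize (HM z ltac:(lra)). simpl in HM. apply Rabs_def2 in HM.
  specialize (Hinc z ltac:(lra)). lra.
Qed.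

Lemma Rpower_unbounded (s C M X : R) : 0 < s -> 0 < C ->
  exists z, X <= z /\ M < C * Rpower z (1 / s).
Proof.
  intros Hs HC.
  set (B := Rmax 1 (M / C + 1)).
  assert (1 <= B) by apply Rmax_l. assert (M / C + 1 <= B) by apply Rmax_r.
  set (z := Rmax X (Rpower B s)).
  assert (X <= z) by apply Rmax_l. assert (Rpower B s <= z) by apply Rmax_r.
  exists z. split; [assumption|].
  assert (HB : Rpower (Rpower B s) (1 / s) = B)
    by (rewrite Rpower_mult; replace (s * (1 / s)) with 1 by (field; lra); apply Rpower_1; lra).
  assert (B <= Rpower z (1 / s)).
  { rewrite <- HB. apply Rle_Rpower_l; [left; apply Rdiv_lt_0_compat; lra|].
    split; [apply exp_pos|assumption]. }
  assert (M < C * B); [|nra].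
  apply (Rmult_lt_reg_r (/ C)); [now apply Rinv_0_lt_compat|].
  replace (C * B * / C) with B by (field; lra). unfold Rdiv in *. lra.
Qed.

Section Solutions.

Variables (s x0 : R) (P : R -> R).
Hypothesis s_pos : 0 < s.
Hypothesis x0_pos : 0 < x0.
Hypothesis P_C2 : C2_on_nonneg P.
Hypothesis P_incr : forall x y, 0 <= x -> x < y -> P x < P y.
Hypothesis P_pos : forall x, 0 < x -> 0 < P x.

Lemma P_le (a b : R) : 0 <= a -> a <= b -> P a <= P b.
Proof. intros Ha Hab. destruct (Req_dec a b) as [->|Hne]; [lra|left; apply P_incr; lra]. Qed.

Lemma P_derivative : exists dP : R -> R,
  forall x, 0 < x -> is_derive P x (dP x) /\ 0 <= dP x.
Proof.
  destruct P_C2 as [Q [HQ HQP]].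
  exists (Derive Q). intros x Hx.
  assert (Hd : is_derive P x (Derive Q x)).
  { apply is_derive_ext_loc with (f := Q); [|apply Derive_correct, (HQ x)].
    exists (mkposreal x Hx). intros t Ht. apply HQP.
    unfold ball in Ht; simpl in Ht; unfold AbsRing_ball, abs, minus, plus, opp in Ht; simpl in Ht.
    apply Rabs_def2 in Ht. lra. }
  split; [exact Hd|]. apply (is_derive_nonneg_of_incr P x); [|exact Hd].
  intros h Hh. apply P_le; lra.
Qed.

Lemma rhs_nonpos (x g : R) : 0 < x -> 0 < g -> g + g ^ 2 - P x <= 0 -> rhs s P x g <= 0.
Proof.
  intros Hx Hg H. apply Rmult_le_0_r; [exact H|].
  left. apply Rinv_0_lt_compat, Rmult_lt_0_compat; [apply Rmult_lt_0_compat|]; lra.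
Qed.

Lemma rhs_pos (x g : R) : 0 < x -> 0 < g -> P x < g + g ^ 2 -> 0 < rhs s P x g.
Proof.
  intros Hx Hg H. apply Rdiv_lt_0_compat; [lra|].
  apply Rmult_lt_0_compat; [apply Rmult_lt_0_compat|]; lra.
Qed.

Lemma solution_right_continuous (g : R -> R) :
  global_solution s P x0 g -> forall y, x0 <= y -> right_continuous g y.
Proof.
  intros [_ [Hrc Hder]] y Hy. destruct (Req_dec y x0) as [->|Hne]; [exact Hrc|].
  apply (is_derive_right_continuous g y (rhs s P y (g y))), Hder. lra.
Qed.


(* Where the gap is positive, [v] exceeds [gamma_c P x0], so the gap grows at most
   exponentially. *)
Lemma quadratic_gap_nonpos_after (v : R -> R) (y z : R) : global_solution s P x0 v ->
  x0 <= y <= z -> v y + v y ^ 2 - P y <= 0 -> v z + v z ^ 2 - P z <= 0.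
Proof.
  intros Hv Hyz Hy.
  destruct P_derivative as [dP HdP].
  assert (Hrc := solution_right_continuous v Hv).
  destruct Hv as [Hpos [_ Hder]].
  set (mu := gamma_c P x0).
  assert (Hmu : 0 < mu) by (apply gamma_c_pos, P_pos; lra).
  set (N := fun x => v x + v x ^ 2 - P x).
  apply (gronwall_nonpos N (fun x => rhs s P x (v x) * (1 + 2 * v x) - dP x)
           ((1 / mu + 2) / (s * x0)) y z); [lra|exact Hy| | |].
  - apply right_continuous_minus; [apply right_continuous_plus|].
    + apply Hrc; lra.
    + apply right_continuous_pow2, Hrc; lra.
    + apply (is_derive_right_continuous P y (dP y)), HdP; lra.
  - intros x Hx. specialize (Hder x ltac:(lra)).
    apply (is_derive_minus (fun x => v x + v x ^ 2) P); [|apply HdP; lra].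
    replace (rhs s P x (v x) * (1 + 2 * v x))
      with (rhs s P x (v x) + INR 2 * rhs s P x (v x) * v x ^ 1) by (simpl; ring).
    apply (is_derive_plus v (fun x => v x ^ 2)); [exact Hder|].
    apply (is_derive_pow v 2 x _ Hder).
  - intros x Hx HNx.
    assert (Hvx : 0 < v x) by (apply Hpos; lra).
    assert (Hmux : mu < v x).
    { apply (Rle_lt_trans _ (gamma_c P x)); [apply gamma_c_le, P_le; lra|].
      apply gamma_c_lt; [lra|left; apply P_pos; lra|unfold N in HNx; lra]. }
    assert (0 <= dP x) by (apply HdP; lra).
    replace (rhs s P x (v x) * (1 + 2 * v x)) with (N x * ((1 / v x + 2) / (s * x)))
      by (unfold N, rhs; field; repeat split; lra).
    enough (N x * ((1 / v x + 2) / (s * x)) <= N x * ((1 / mu + 2) / (s * x0))) by lra.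
    apply Rmult_le_compat_l; [lra|].
    unfold Rdiv. apply Rmult_le_compat.
    + assert (0 < 1 * / v x) by (apply Rmult_lt_0_compat; [lra|apply Rinv_0_lt_compat; lra]). lra.
    + left. apply Rinv_0_lt_compat. nra.
    + apply Rplus_le_compat_r, Rmult_le_compat_l; [lra|]. apply Rinv_le_contravar; lra.
    + apply Rinv_le_contravar; [nra|]. apply Rmult_le_compat_l; lra.
Qed.

Lemma solution_gap_not_uniformly_negative (v : R -> R) (y k : R) : global_solution s P x0 v ->
  x0 <= y -> 0 < k -> ~ (forall z, y <= z -> v z + v z ^ 2 - P z <= - k).
Proof.
  intros Hv Hy Hk Hgap.
  assert (Hrc := solution_right_continuous v Hv y Hy).
  destruct Hv as [Hpos [_ Hder]].
  set (Phi := fun x => v x ^ 2 + 2 * k / s * ln x).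
  set (z := y * exp (s * v y ^ 2 / (2 * k) + 1)).
  assert (0 <= s * v y ^ 2 / (2 * k))
    by (apply Rmult_le_pos; [apply Rmult_le_pos, pow2_ge_0|left; apply Rinv_0_lt_compat]; lra).
  assert (Hz : y <= z).
  { assert (1 <= exp (s * v y ^ 2 / (2 * k) + 1)).
    { assert (H1 := exp_ineq1_le (s * v y ^ 2 / (2 * k) + 1)). lra. }
    unfold z. nra. }
  assert (HPhi : Phi z <= Phi y).
  { apply (ge_of_is_derive_nonpos Phi (fun x => 2 * (v x + v x ^ 2 - P x + k) / (s * x)) y z Hz).
    - apply right_continuous_plus; [now apply right_continuous_pow2|].
      apply (is_derive_right_continuous _ y (2 * k / s * / y)). auto_derive; [lra|ring].
    - intros x Hx.
      assert (Hvx : 0 < v x) by (apply Hpos; lra).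
      replace (2 * (v x + v x ^ 2 - P x + k) / (s * x))
        with (INR 2 * rhs s P x (v x) * v x ^ 1 + 2 * k / s * / x)
        by (unfold rhs; simpl; field; repeat split; lra).
      apply (is_derive_plus (fun x => v x ^ 2) (fun x => 2 * k / s * ln x)).
      + apply (is_derive_pow v 2 x _ (Hder x ltac:(lra))).
      + auto_derive; [lra|ring].
    - intros x Hx. specialize (Hgap x ltac:(lra)).
      apply Rmult_le_0_r; [lra|left; apply Rinv_0_lt_compat; nra]. }
  assert (Hlnz : ln z = ln y + (s * v y ^ 2 / (2 * k) + 1)).
  { unfold z. rewrite ln_mult, ln_exp; [reflexivity|lra|apply exp_pos]. }
  unfold Phi in HPhi. rewrite Hlnz in HPhi.
  assert (0 <= v z ^ 2) by apply pow2_ge_0.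
  assert (0 < 2 * k / s) by (apply Rdiv_lt_0_compat; lra).
  replace (2 * k / s * (ln y + (s * v y ^ 2 / (2 * k) + 1)))
    with (2 * k / s * ln y + v y ^ 2 + 2 * k / s) in HPhi by (field; lra).
  lra.
Qed.

Lemma P_lt_solution_quadratic (v : R -> R) (y : R) : global_solution s P x0 v ->
  x0 <= y -> P y < v y + v y ^ 2.
Proof.
  intros Hv Hy.
  destruct (Rlt_or_le (P y) (v y + v y ^ 2)) as [H|H]; [exact H|exfalso].
  assert (Hgap : forall z, y <= z -> v z + v z ^ 2 - P z <= 0).
  { intros z Hz. apply (quadratic_gap_nonpos_after v y z Hv); lra. }
  assert (Hdecr : forall z, y <= z -> v z <= v y).
  { intros z Hz. assert (Hrc := solution_right_continuous v Hv y Hy).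
    destruct Hv as [Hpos [_ Hder]].
    apply (ge_of_is_derive_nonpos v (fun x => rhs s P x (v x)) y z Hz Hrc).
    - intros x Hx. apply Hder. lra.
    - intros x Hx. apply rhs_nonpos; [lra|apply Hpos; lra|apply Hgap; lra]. }
  apply (solution_gap_not_uniformly_negative v (y + 1) (P (y + 1) - P y) Hv);
    [lra|assert (P y < P (y + 1)) by (apply P_incr; lra); lra|].
  intros z Hz.
  assert (Hvz := Hdecr z ltac:(lra)).
  assert (0 < v z) by (destruct Hv as [Hpos _]; apply Hpos; lra).
  assert (P (y + 1) <= P z) by (apply P_le; lra).
  assert (v z ^ 2 <= v y ^ 2) by (simpl; nra).
  lra.
Qed.

Lemma gamma_c_lt_solution (g : R -> R) (x : R) : global_solution s P x0 g ->
  x0 <= x -> gamma_c P x < g x.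
Proof.
  intros Hg Hx. apply gamma_c_lt.
  - destruct Hg as [Hpos _]. left; apply Hpos, Hx.
  - left; apply P_pos; lra.
  - now apply P_lt_solution_quadratic.
Qed.

Lemma gamma_c_x0_lt_solution (g : R -> R) (x : R) : global_solution s P x0 g ->
  x0 <= x -> gamma_c P x0 < g x.
Proof.
  intros Hg Hx. apply (Rle_lt_trans _ (gamma_c P x)); [apply gamma_c_le, P_le; lra|].
  now apply gamma_c_lt_solution.
Qed.

Lemma solution_strict_incr (g : R -> R) (a b : R) : global_solution s P x0 g ->
  x0 <= a < b -> g a < g b.
Proof.
  intros Hg Hab.
  apply (lt_of_is_derive_pos g (fun x => rhs s P x (g x)) a b); [lra| | |].
  - apply (solution_right_continuous g Hg); lra.
  - intros x Hx. destruct Hg as [_ [_ Hder]]. apply Hder; lra.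
  - intros x Hx.
    assert (Hgx : 0 < g x) by (destruct Hg as [Hpos _]; apply Hpos; lra).
    apply rhs_pos; [lra|exact Hgx|apply P_lt_solution_quadratic; [exact Hg|lra]].
Qed.

Lemma rhs_lipschitz (x g1 g2 mu Pb : R) : x0 <= x -> 0 < mu -> mu <= g1 -> mu <= g2 ->
  P x <= Pb -> Rabs (rhs s P x g1 - rhs s P x g2)
               <= (1 / (s * x0) + Pb / (s * x0 * (mu * mu))) * Rabs (g1 - g2).
Proof.
  intros Hx Hmu Hg1 Hg2 HPb.
  assert (0 < P x) by (apply P_pos; lra).
  rewrite rhs_sub, Rabs_mult by (apply Rgt_not_eq; nra).
  rewrite (Rmult_comm _ (Rabs (g1 - g2))).
  apply Rmult_le_compat_l; [apply Rabs_pos|].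
  assert (0 < s * x) by nra. assert (0 < s * x0) by nra.
  assert (0 < g1 * g2) by nra. assert (mu * mu <= g1 * g2) by nra.
  rewrite Rabs_right by (apply Rle_ge, Rplus_le_le_0_compat;
    apply Rlt_le, Rdiv_lt_0_compat; nra).
  unfold Rdiv. apply Rplus_le_compat.
  - apply Rmult_le_compat_l; [lra|]. apply Rinv_le_contravar; nra.
  - apply Rmult_le_compat; [lra|left; apply Rinv_0_lt_compat; nra|lra|].
    assert (0 < mu * mu) by nra.
    apply Rinv_le_contravar; [now apply Rmult_lt_0_compat|].
    apply Rmult_le_compat; nra.
Qed.

Lemma solution_le_of_le_x0 (g1 g2 : R -> R) (x : R) :
  global_solution s P x0 g1 -> global_solution s P x0 g2 ->
  g1 x0 <= g2 x0 -> x0 <= x -> g1 x <= g2 x.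
Proof.
  intros Hg1 Hg2 Hle0 Hx.
  set (mu := gamma_c P x0).
  assert (Hmu : 0 < mu) by (apply gamma_c_pos, P_pos; lra).
  assert (Hrc1 := solution_right_continuous g1 Hg1 x0 (Rle_refl x0)).
  assert (Hrc2 := solution_right_continuous g2 Hg2 x0 (Rle_refl x0)).
  enough (g1 x - g2 x <= 0) by lra.
  apply (gronwall_nonpos (fun x => g1 x - g2 x)
           (fun x => rhs s P x (g1 x) - rhs s P x (g2 x))
           (1 / (s * x0) + P x / (s * x0 * (mu * mu))) x0 x Hx); [lra| | |].
  - now apply right_continuous_minus.
  - intros y Hy. destruct Hg1 as [_ [_ Hd1]], Hg2 as [_ [_ Hd2]].
    apply (is_derive_minus g1 g2); [apply Hd1|apply Hd2]; lra.
  - intros y Hy Hpos.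
    eapply Rle_trans; [apply Rle_abs|].
    rewrite <- (Rabs_right (g1 y - g2 y)) by lra.
    apply rhs_lipschitz; try lra; try (left; apply gamma_c_x0_lt_solution; auto; lra).
    apply P_le; lra.
Qed.

Lemma right_continuous_Rpower_scaled (f : R -> R) (a y : R) : 0 < a ->
  right_continuous f a -> right_continuous (fun x => f x * Rpower x y) a.
Proof.
  intros Ha Hf. apply (right_continuous_mult f _ a Hf).
  exact (is_derive_right_continuous _ a _ (is_derive_Rpower a y Ha)).
Qed.

(* The derivative of [(1 + g) x^(-1/s)] is [- x^(-1/s) P / (s x g)]. *)
Lemma solution_scaled_decr (g : R -> R) (a b : R) : global_solution s P x0 g ->
  x0 <= a <= b -> (1 + g b) * Rpower b (- (1 / s)) <= (1 + g a) * Rpower a (- (1 / s)).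
Proof.
  intros Hg Hab.
  assert (Hrc := solution_right_continuous g Hg a ltac:(lra)).
  destruct Hg as [Hpos [_ Hder]].
  apply (ge_of_is_derive_nonpos (fun x => (1 + g x) * Rpower x (- (1 / s)))
           (fun x => rhs s P x (g x) * Rpower x (- (1 / s))
                     + (1 + g x) * (- (1 / s) * Rpower x (- (1 / s)) / x)) a b); [lra| | |].
  - apply right_continuous_Rpower_scaled; [lra|].
    apply (right_continuous_plus (fun _ => 1) g a); [|exact Hrc].
    apply continuity_pt_right_continuous, continuity_pt_const. now intros ? ?.
  - intros x Hx. apply (is_derive_mult (fun x => 1 + g x) (fun x => Rpower x (- (1 / s))));
      [| |exact Rmult_comm].
    + replace (rhs s P x (g x)) with (0 + rhs s P x (g x)) by ring.
      apply (is_derive_plus (fun _ => 1) g); [exact (is_derive_const (K := R_AbsRing) (V := R_NormedModule) 1 x)|apply Hder; lra].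
    + apply (is_derive_Rpower x (- (1 / s))); lra.
  - intros x Hx.
    assert (0 < g x) by (apply Hpos; lra). assert (0 < P x) by (apply P_pos; lra).
    assert (0 < Rpower x (- (1 / s))) by apply exp_pos.
    replace (rhs s P x (g x) * Rpower x (- (1 / s))
             + (1 + g x) * (- (1 / s) * Rpower x (- (1 / s)) / x))
      with (- (Rpower x (- (1 / s)) * P x / (s * x * g x)))
      by (unfold rhs; field; repeat split; lra).
    enough (0 < Rpower x (- (1 / s)) * P x / (s * x * g x)) by lra.
    apply Rdiv_lt_0_compat; [nra|apply Rmult_lt_0_compat; [apply Rmult_lt_0_compat|]; lra].
Qed.

(* The derivative of [(g - v) x^(-1/s)] is [x^(-1/s) P (g - v) / (s x g v)]. *)
Lemma solution_gap_scaled_incr (g v : R -> R) (a b : R) :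
  global_solution s P x0 g -> global_solution s P x0 v ->
  (forall x, x0 <= x -> v x <= g x) -> x0 <= a <= b ->
  (g a - v a) * Rpower a (- (1 / s)) <= (g b - v b) * Rpower b (- (1 / s)).
Proof.
  intros Hg Hv Hle Hab.
  assert (Hrcg := solution_right_continuous g Hg a ltac:(lra)).
  assert (Hrcv := solution_right_continuous v Hv a ltac:(lra)).
  destruct Hg as [Hgpos [_ Hgder]], Hv as [Hvpos [_ Hvder]].
  apply (le_of_is_derive_nonneg (fun x => (g x - v x) * Rpower x (- (1 / s)))
           (fun x => (rhs s P x (g x) - rhs s P x (v x)) * Rpower x (- (1 / s))
                     + (g x - v x) * (- (1 / s) * Rpower x (- (1 / s)) / x)) a b); [lra| | |].
  - apply right_continuous_Rpower_scaled; [lra|now apply right_continuous_minus].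
  - intros x Hx. apply (is_derive_mult (fun x => g x - v x) (fun x => Rpower x (- (1 / s))));
      [| |exact Rmult_comm].
    + apply (is_derive_minus g v); [apply Hgder|apply Hvder]; lra.
    + apply (is_derive_Rpower x (- (1 / s))); lra.
  - intros x Hx.
    assert (0 < g x) by (apply Hgpos; lra). assert (0 < v x) by (apply Hvpos; lra).
    assert (0 < P x) by (apply P_pos; lra). assert (v x <= g x) by (apply Hle; lra).
    assert (0 < Rpower x (- (1 / s))) by apply exp_pos.
    replace ((rhs s P x (g x) - rhs s P x (v x)) * Rpower x (- (1 / s))
             + (g x - v x) * (- (1 / s) * Rpower x (- (1 / s)) / x))
      with (Rpower x (- (1 / s)) * P x * (g x - v x) / (s * x * (g x * v x)))
      by (unfold rhs; field; repeat split; lra).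
    apply Rmult_le_pos; [apply Rmult_le_pos; [nra|lra]|].
    left. apply Rinv_0_lt_compat. apply Rmult_lt_0_compat; [|apply Rmult_lt_0_compat]; nra.
Qed.

Lemma solution_le_power (g : R -> R) (x : R) : global_solution s P x0 g -> x0 <= x ->
  g x <= (1 + g x0) * Rpower x0 (- (1 / s)) * Rpower x (1 / s).
Proof.
  intros Hg Hx.
  assert (H := solution_scaled_decr g x0 x Hg ltac:(lra)).
  assert (0 < Rpower x (1 / s)) by apply exp_pos.
  apply (Rmult_le_compat_r (Rpower x (1 / s))) in H; [|lra].
  rewrite Rmult_assoc, Rpower_opp_mul, Rmult_1_r in H by lra. lra.
Qed.

Lemma solution_gap_ge_power (g v : R -> R) (x : R) :
  global_solution s P x0 g -> global_solution s P x0 v ->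
  (forall x, x0 <= x -> v x <= g x) -> x0 <= x ->
  (g x0 - v x0) * Rpower x0 (- (1 / s)) * Rpower x (1 / s) <= g x - v x.
Proof.
  intros Hg Hv Hle Hx.
  assert (H := solution_gap_scaled_incr g v x0 x Hg Hv Hle ltac:(lra)).
  assert (0 < Rpower x (1 / s)) by apply exp_pos.
  apply (Rmult_le_compat_r (Rpower x (1 / s))) in H; [|lra].
  rewrite (Rmult_assoc (g x - v x)), Rpower_opp_mul, Rmult_1_r in H by lra. exact H.
Qed.

Lemma solution_above_growth (v g : R -> R) :
  global_solution s P x0 v -> global_solution s P x0 g -> v x0 < g x0 ->
  exists C1 C2, 0 < C1 /\ C1 < C2 /\ exists X, forall x, X <= x ->
    C1 * Rpower x (1 / s) <= g x /\ g x <= C2 * Rpower x (1 / s).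
Proof.
  intros Hv Hg Hlt.
  assert (Hle : forall x, x0 <= x -> v x <= g x)
    by (intros x Hx; apply solution_le_of_le_x0; auto; lra).
  assert (0 < Rpower x0 (- (1 / s))) by apply exp_pos.
  assert (0 < g x0) by (destruct Hg as [Hpos _]; apply Hpos; lra).
  set (C1 := (g x0 - v x0) * Rpower x0 (- (1 / s))).
  set (C2 := (1 + g x0) * Rpower x0 (- (1 / s))).
  assert (0 < C1) by (apply Rmult_lt_0_compat; lra).
  assert (C1 < C2) by (apply Rmult_lt_compat_r; [|destruct Hv as [Hpos _]; specialize (Hpos x0)]; lra).
  exists C1, C2. split; [assumption|]. split; [assumption|].
  exists x0. intros x Hx. split.
  - assert (0 < v x) by (destruct Hv as [Hpos _]; apply Hpos; lra).
    assert (Hgap := solution_gap_ge_power g v x Hg Hv Hle Hx). fold C1 in Hgap. lra.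
  - exact (solution_le_power g x Hg Hx).
Qed.

(* Clamping [t >= x0] and [y >= a > 0] makes the right-hand side globally Lipschitz in [y],
   so that Picard iteration produces solutions on all of [[x0, oo)]. *)
Definition rhs_trunc (a t y : R) : R := rhs s P (Rmax t x0) (Rmax y a).

Lemma rhs_trunc_eq (a t y : R) : x0 <= t -> a <= y -> rhs_trunc a t y = rhs s P t y.
Proof. intros Ht Hy. unfold rhs_trunc. now rewrite Rmax_left, Rmax_left by lra. Qed.

Lemma trunc_lipschitz_const_nonneg (a Pb : R) : 0 < a -> P x0 <= Pb ->
  0 <= 1 / (s * x0) + Pb / (s * x0 * (a * a)).
Proof.
  intros Ha HPb. assert (0 < P x0) by (apply P_pos; lra).
  apply Rplus_le_le_0_compat; apply Rlt_le, Rdiv_lt_0_compat; try nra.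
  apply Rmult_lt_0_compat; nra.
Qed.

Lemma rhs_trunc_lipschitz (a Pb t y1 y2 : R) : 0 < a -> (forall Y, x0 <= Y -> P Y <= Pb) ->
  Rabs (rhs_trunc a t y1 - rhs_trunc a t y2)
  <= (1 / (s * x0) + Pb / (s * x0 * (a * a))) * Rabs (y1 - y2).
Proof.
  intros Ha HPb. unfold rhs_trunc.
  assert (x0 <= Rmax t x0) by apply Rmax_r.
  eapply Rle_trans;
    [apply (rhs_lipschitz (Rmax t x0) (Rmax y1 a) (Rmax y2 a) a Pb); try apply Rmax_r; auto|].
  apply Rmult_le_compat_l; [|apply Rabs_Rmax_sub_le].
  apply trunc_lipschitz_const_nonneg; [exact Ha|apply HPb; lra].
Qed.

Lemma rhs_trunc_bounded (a Pb c : R) : 0 < a -> (forall Y, x0 <= Y -> P Y <= Pb) ->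
  exists M, 0 <= M /\ forall t, Rabs (rhs_trunc a t c) <= M.
Proof.
  intros Ha HPb.
  set (Y := Rmax c a).
  assert (a <= Y) by apply Rmax_r.
  assert (0 < P x0) by (apply P_pos; lra). assert (P x0 <= Pb) by (apply HPb; lra).
  exists ((1 + Y) / (s * x0) + Pb / (s * x0 * a)). split.
  - apply Rplus_le_le_0_compat; apply Rlt_le, Rdiv_lt_0_compat; try nra.
    apply Rmult_lt_0_compat; nra.
  - intros t. unfold rhs_trunc. fold Y. set (T := Rmax t x0).
    assert (x0 <= T) by apply Rmax_r.
    assert (0 < P T) by (apply P_pos; lra). assert (P T <= Pb) by (apply HPb; lra).
    replace (rhs s P T Y) with ((1 + Y) / (s * T) - P T / (s * T * Y))
      by (unfold rhs; field; repeat split; nra).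
    eapply Rle_trans; [apply Rabs_triang|]. rewrite Rabs_Ropp.
    assert (0 < s * x0) by nra.
    rewrite !Rabs_right by (apply Rle_ge, Rlt_le, Rdiv_lt_0_compat;
                            try apply Rmult_lt_0_compat; nra).
    unfold Rdiv. apply Rplus_le_compat.
    + apply Rmult_le_compat_l; [lra|]. apply Rinv_le_contravar; nra.
    + apply Rmult_le_compat; [lra|left; apply Rinv_0_lt_compat, Rmult_lt_0_compat; nra|lra|].
      apply Rinv_le_contravar; [nra|]. apply Rmult_le_compat; nra.
Qed.

Lemma rhs_trunc_continuous (a : R) (phi : R -> R) : 0 < a ->
  (forall t, continuity_pt phi t) -> forall t, continuity_pt (fun u => rhs_trunc a u (phi u)) t.
Proof.
  intros Ha Hphi t.
  destruct P_derivative as [dP HdP].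
  set (T := fun u => Rmax u x0). set (Y := fun u => Rmax (phi u) a).
  assert (HT : continuity_pt T t)
    by (apply continuity_pt_Rmax; [apply continuity_pt_id|apply continuity_pt_const; now intros ? ?]).
  assert (HY : continuity_pt Y t)
    by (apply continuity_pt_Rmax; [apply Hphi|apply continuity_pt_const; now intros ? ?]).
  assert (x0 <= T t) by apply Rmax_r. assert (a <= Y t) by apply Rmax_r.
  unfold rhs_trunc, rhs. fold (T t) (Y t).
  apply (continuity_pt_div (fun u => Y u + Y u ^ 2 - P (T u)) (fun u => s * T u * Y u)).
  - apply continuity_pt_minus; [apply continuity_pt_plus; [exact HY|]|].
    + apply continuity_pt_ext with (f := fun u => Y u * Y u); [intros u; simpl; ring|].
      now apply continuity_pt_mult.
    + apply (continuity_pt_comp T P t HT).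
      apply (is_derive_continuity_pt P (T t) (dP (T t))), HdP. lra.
  - apply continuity_pt_mult; [apply continuity_pt_mult; [|exact HT]|exact HY].
    apply continuity_pt_const. now intros ? ?.
  - apply Rgt_not_eq. apply Rmult_lt_0_compat; [apply Rmult_lt_0_compat|]; lra.
Qed.

Lemma trunc_solution_stays_above (a m l x1 : R) (h : R -> R) :
  0 < a -> a <= m -> (forall Y, x0 <= Y -> P Y < m + m ^ 2) -> x0 < x1 ->
  (forall u, x1 <= u -> is_derive h u (rhs_trunc a u (h u))) ->
  m < l <= h x1 -> forall t, x1 <= t -> l <= h t.
Proof.
  intros Ha Ham HPm Hx1 Hder Hl t Ht.
  enough (- h t <= - l) by lra.
  apply (barrier_le (fun u => - h u) (fun u => - rhs_trunc a u (h u)) x1 t (- l) (- l - 1) (- m));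
    [lra|lra|lra| | | |lra].
  - apply right_continuous_opp.
    exact (is_derive_right_continuous h x1 _ (Hder x1 (Rle_refl x1))).
  - intros u Hu. apply (is_derive_opp h), Hder. lra.
  - intros u Hu Hband.
    rewrite rhs_trunc_eq by lra.
    assert (m ^ 2 < h u ^ 2) by (simpl; nra).
    assert (HPu := HPm u ltac:(lra)).
    enough (0 < rhs s P u (h u)) by lra.
    apply rhs_pos; lra.
Qed.

Lemma trunc_solution_near (v : R -> R) (a Pb eta : R) : global_solution s P x0 v ->
  0 < a -> (forall t, x0 <= t -> a <= v t) -> (forall Y, x0 <= Y -> P Y <= Pb) -> 0 <= eta ->
  exists h : R -> R, h x0 = v x0 - eta /\ right_continuous h x0 /\
    (forall t, x0 < t -> is_derive h t (rhs_trunc a t (h t))) /\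
    forall t, x0 <= t ->
      Rabs (h t - v t) <= eta * exp ((1 / (s * x0) + Pb / (s * x0 * (a * a))) * (t - x0)).
Proof.
  intros Hv Ha Hva HPb Heta.
  set (K := 1 / (s * x0) + Pb / (s * x0 * (a * a))).
  assert (HK : 0 <= K) by (apply trunc_lipschitz_const_nonneg; [exact Ha|apply HPb; lra]).
  assert (HL : forall t y1 y2, Rabs (rhs_trunc a t y1 - rhs_trunc a t y2) <= K * Rabs (y1 - y2))
    by (intros t y1 y2; now apply rhs_trunc_lipschitz).
  destruct (rhs_trunc_bounded a Pb (v x0 - eta) Ha HPb) as [M [HM HGM]].
  destruct (picard_lindelof (rhs_trunc a) x0 (v x0 - eta) K M) as [h [Hh0 [Hhrc Hhder]]];
    try assumption.
  { intros phi Hphi. now apply rhs_trunc_continuous. }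
  exists h. do 3 (split; [assumption|]).
  intros t Ht.
  replace eta with (Rabs (h x0 - v x0))
    by (rewrite Hh0, <- Rabs_Ropp, Rabs_right; [ring|lra]).
  apply (lipschitz_ode_stability (rhs_trunc a) K x0 t h v HK HL Ht Hhrc).
  - apply (solution_right_continuous v Hv); lra.
  - intros u Hu. split; [apply Hhder; lra|].
    rewrite rhs_trunc_eq by (try apply Hva; lra).
    destruct Hv as [_ [_ Hvder]]. apply Hvder. lra.
Qed.

(* If [v + v^2] stayed below [sup P], a solution starting slightly below [v] at [x0]
   would still be global: it stays close to [v] up to [x + 1], where [v] has already
   climbed above the level [v x], and then it cannot fall back. *)
Lemma minimal_solution_quadratic_le_P (v : R -> R) (x : R) :
  global_solution s P x0 v -> (forall g, global_solution s P x0 g -> v x0 <= g x0) ->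
  x0 <= x -> exists Y, x0 <= Y /\ v x + v x ^ 2 <= P Y.
Proof.
  intros Hv Hmin Hx.
  apply NNPP. intros Hno.
  set (m := v x).
  assert (HPm : forall Y, x0 <= Y -> P Y < m + m ^ 2).
  { intros Y HY. apply Rnot_le_lt. intros H. apply Hno. now exists Y. }
  assert (Hmu : 0 < gamma_c P x0) by (apply gamma_c_pos, P_pos; lra).
  set (a := gamma_c P x0 / 2).
  assert (Ha : 0 < a) by (unfold a; lra).
  assert (Hva : forall t, x0 <= t -> 2 * a < v t).
  { intros t Ht. assert (gamma_c P x0 < v t) by now apply gamma_c_x0_lt_solution.
    unfold a; lra. }
  assert (Ham : a <= m) by (assert (Hvx := Hva x Hx); fold m in Hvx; lra).
  set (x1 := x + 1).
  assert (Hvx1 : m < v x1) by (apply (solution_strict_incr v x x1 Hv); unfold x1; lra).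
  set (kr := Rmin a (v x1 - m)).
  assert (kr <= a) by apply Rmin_l. assert (kr <= v x1 - m) by apply Rmin_r.
  assert (0 < kr) by (apply Rmin_glb_lt; lra).
  set (K := 1 / (s * x0) + (m + m ^ 2) / (s * x0 * (a * a))).
  assert (HK : 0 <= K) by (apply trunc_lipschitz_const_nonneg; [exact Ha|left; apply HPm; lra]).
  set (E := exp (K * (x1 - x0))).
  assert (0 < E) by apply exp_pos.
  destruct (trunc_solution_near v a (m + m ^ 2) (kr / (2 * E)) Hv) as [h [Hh0 [Hhrc [Hhder Hnear]]]].
  - exact Ha.
  - intros t Ht. specialize (Hva t Ht). lra.
  - intros Y HY. left; now apply HPm.
  - apply Rlt_le, Rdiv_lt_0_compat; lra.
  - assert (Hclose : forall t, x0 <= t <= x1 -> Rabs (h t - v t) <= kr / 2).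
    { intros t Ht. eapply Rle_trans; [apply Hnear; lra|].
      replace (kr / 2) with (kr / (2 * E) * E) by (field; lra).
      apply Rmult_le_compat_l; [apply Rlt_le, Rdiv_lt_0_compat; lra|].
      apply exp_le_compat, Rmult_le_compat_l; lra. }
    assert (Hhx1 : m < h x1).
    { assert (Hc1 := Hclose x1 ltac:(unfold x1; lra)). apply Rabs_le_between in Hc1. lra. }
    assert (Hha : forall t, x0 <= t -> a < h t).
    { intros t Ht. destruct (Rle_or_lt t x1) as [Htx1|Htx1].
      - assert (Hct := Hclose t ltac:(lra)). apply Rabs_le_between in Hct.
        assert (Hvt := Hva t Ht). lra.
      - enough ((m + h x1) / 2 <= h t) by lra.
        apply (trunc_solution_stays_above a m ((m + h x1) / 2) x1 h); try (unfold x1 in *; lra).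
        + exact HPm.
        + intros u Hu. apply Hhder. unfold x1 in *; lra. }
    assert (Hh : global_solution s P x0 h).
    { split; [intros t Ht; assert (Hat := Hha t Ht); lra|].
      split; [exact Hhrc|].
      intros t Ht. rewrite <- (rhs_trunc_eq a t (h t)) by (try left; try apply Hha; lra).
      apply Hhder, Ht. }
    specialize (Hmin h Hh). rewrite Hh0 in Hmin.
    assert (0 < kr / (2 * E)) by (apply Rdiv_lt_0_compat; lra). lra.
Qed.

Lemma minimal_solution_le_Lim_gamma_c (v : R -> R) (x : R) : global_solution s P x0 v ->
  (forall g, global_solution s P x0 g -> v x0 <= g x0) ->
  x0 <= x -> Rbar_le (v x) (Lim (gamma_c P) p_infty).
Proof.
  intros Hv Hmin Hx.
  destruct (minimal_solution_quadratic_le_P v x Hv Hmin Hx) as [Y [HY HYx]].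
  apply (Rbar_le_Lim_p_infty _ _ Y). intros z Hz.
  apply (Rle_trans _ (gamma_c P Y)); [|apply gamma_c_le, P_le; lra].
  apply gamma_c_ge; [|exact HYx]. destruct Hv as [Hpos _]. left; apply Hpos, Hx.
Qed.

Lemma minimal_solution_bounded (v : R -> R) (L x : R) : global_solution s P x0 v ->
  (forall g, global_solution s P x0 g -> v x0 <= g x0) ->
  is_lim P p_infty L -> x0 <= x -> Rabs (v x) <= L.
Proof.
  intros Hv Hmin HL Hx.
  destruct (minimal_solution_quadratic_le_P v x Hv Hmin Hx) as [Y [HY HYx]].
  assert (P Y <= L) by (apply le_lim_of_incr; [intros y Hy; apply P_incr; lra|exact HL]).
  assert (0 < v x) by (destruct Hv as [Hpos _]; apply Hpos, Hx).
  rewrite Rabs_right by lra. nra.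
Qed.

Lemma bounded_solution_eq_minimal (v g : R -> R) (x : R) : global_solution s P x0 v ->
  (forall g, global_solution s P x0 g -> v x0 <= g x0) ->
  global_solution s P x0 g -> (exists M, forall x, x0 <= x -> Rabs (g x) <= M) ->
  x0 <= x -> g x = v x.
Proof.
  intros Hv Hmin Hg [M HM] Hx.
  assert (Heq0 : g x0 = v x0).
  { apply Rle_antisym; [|apply Hmin, Hg]. apply Rnot_lt_le. intros Hlt.
    destruct (solution_above_growth v g Hv Hg Hlt) as [C1 [C2 [HC1 [_ [X HX]]]]].
    destruct (Rpower_unbounded s C1 M (Rmax X x0) s_pos HC1) as [z [Hz HMz]].
    assert (X <= z) by (eapply Rle_trans; [apply Rmax_l|exact Hz]).
    assert (x0 <= z) by (eapply Rle_trans; [apply Rmax_r|exact Hz]).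
    destruct (HX z ltac:(assumption)) as [Hlow _].
    specialize (HM z ltac:(assumption)). apply Rabs_le_between in HM. lra. }
  apply Rle_antisym; apply solution_le_of_le_x0; auto; lra.
Qed.

End Solutions.

Theorem corollary1 (s x0 : R) (P : R -> R) (gstar : R -> R) :
  0 < s -> 0 < x0 ->
  C2_on_nonneg P ->
  (forall x y, 0 <= x -> x < y -> P x < P y) ->
  P 0 = 0 ->
  (forall x, 0 < x -> 0 < P x) ->
  ex_RInt_gen (fun z => P z * Rpower z (-1 - 2 / s)) (at_point x0) (Rbar_locally p_infty) ->
  (* gstar is the separatrix: the smallest global solution *)
  global_solution s P x0 gstar ->
  (forall g, global_solution s P x0 g -> gstar x0 <= g x0) ->
  (forall g, global_solution s P x0 g -> gstar x0 < g x0 ->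
     exists C1 C2, 0 < C1 /\ C1 < C2 /\
       exists X, forall x, X <= x ->
         C1 * Rpower x (1 / s) <= g x /\ g x <= C2 * Rpower x (1 / s)) /\
  (exists C, 0 < C /\ forall x, x0 <= x ->
     gamma_c P x < gstar x /\
     Rbar_le (Finite (gstar x)) (Lim (gamma_c P) p_infty) /\
     gstar x <= C * Rpower x (1 / s)) /\
  ((exists L : R, is_lim P p_infty (Finite L)) ->
     (exists M, forall x, x0 <= x -> Rabs (gstar x) <= M) /\
     (forall g, global_solution s P x0 g ->
        (exists M, forall x, x0 <= x -> Rabs (g x) <= M) ->
        forall x, x0 <= x -> g x = gstar x)).
Proof.
  (* [P 0 = 0] and the integrability of [P z z^(-1-2/s)] only serve to construct the
     separatrix, which is given here. *)
  intros Hs Hx0 HC2 Hinc _ HP _ Hstar Hmin.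
  split; [intros g; exact (solution_above_growth s x0 P Hs Hx0 HC2 Hinc HP gstar g Hstar)|].
  split.
  - exists ((1 + gstar x0) * Rpower x0 (- (1 / s))).
    assert (0 < gstar x0) by (destruct Hstar as [Hpos _]; apply Hpos; lra).
    split; [apply Rmult_lt_0_compat; [lra|apply exp_pos]|].
    intros x Hx. split; [|split].
    + exact (gamma_c_lt_solution s x0 P Hs Hx0 HC2 Hinc HP gstar x Hstar Hx).
    + exact (minimal_solution_le_Lim_gamma_c s x0 P Hs Hx0 HC2 Hinc HP gstar x Hstar Hmin Hx).
    + exact (solution_le_power s x0 P Hs Hx0 HP gstar x Hstar Hx).
  - intros [L HL]. split.
    + exists L. intros x Hx.
      exact (minimal_solution_bounded s x0 P Hs Hx0 HC2 Hinc HP gstar L x Hstar Hmin HL Hx).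
    + intros g Hg Hbd x Hx.
      exact (bounded_solution_eq_minimal s x0 P Hs Hx0 HC2 Hinc HP gstar g x Hstar Hmin Hg Hbd Hx).
Qed.
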